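(* Suppose $w$ satisfies (A1) and that (A2s) holds for every $\delta\in(0,1/2)$. Then there is a constant $C>0$ independent of $\delta$ such that for every $\delta\in(0,1/2)$ and every $x\in\Omega$, $a_\delta(x)-\int_0^1\widetilde w_\delta(x,y)\,dy\ \ge\ C\,\delta\, b_\delta(x).$
   Context: Throughout, $\Omega=(0,1)$, $\delta\in(0,1/2)$, $|\cdot|$ applied to a set denotes Lebesgue measure, and $\chi_A$ denotes the indicator function of a set $A$. A function $w:[0,\infty)\to[0,\infty)$ satisfies (A1) if $w$ is continuous and nonincreasing on $[0,1)$, positive on $(0,1)$, $w(r)=0$ for $r\ge 1$, and $\int_{\mathbb R} w(|z|)|z|^2\,dz=2$. Set $w_\delta(x,y)=\delta^{-3}w(|x-y|/\delta)$, $a_\delta(x)=\int_0^1 w_\delta(x,y)\,dy$, and $b_\delta(x)=\frac{2}{(x+\delta)^2}\int_{x-\delta}^{0}(x-y)w_\delta(x,y)\,dy$ for $x\in(0,\delta)$, $b_\delta(x)=\frac{2}{(1-x+\delta)^2}\int_{1}^{x+\delta}(y-x)w_\delta(x,y)\,dy$ for $x\in(1-\delta,1)$, and $b_\delta(x)=0$ otherwise. Define $\widetilde w_\delta(x,y)=|w_\delta(x,y)-b_\delta(x)\chi_{(0,\delta)}(|y-x|)|$. Condition (A2s) (for a given $\delta$): for every $x\in\Omega$, $|\{y\in\Omega: w_\delta(x,y)-b_\delta(x)\chi_{[0,\delta]}(|y-x|)\ge 0\}|\ \ge\ |\{y\in\Omega: w_\delta(x,y)-b_\delta(x)\chi_{[0,\delta]}(|y-x|)\le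 0\}|$. *)

From HB Require Import structures.
From mathcomp Require Import all_boot all_order all_algebra.
From mathcomp Require Import all_classical all_reals all_analysis.
Set Implicit Arguments. Unset Strict Implicit. Unset Printing Implicit Defensive.
Import Order.TTheory GRing.Theory Num.Theory.
Import numFieldNormedType.Exports.
Local Open Scope classical_set_scope.
Local Open Scope ring_scope.

Section Defs.
Variable R : realType.
Local Notation mu := (@lebesgue_measure R).

(* Assumption (A1) on the kernel w : [0,oo) -> [0,oo) (values at negative
   arguments are irrelevant: w is only ever evaluated at nonnegative reals). *)
Definition A1 (w : R -> R) : Prop :=
  (forall r, 0 <= r -> 0 <= w r) /\
  [/\ {within `[0, 1[, continuous w},
      (forall r s, 0 <= r -> r <= s -> s < 1 -> w s <= w r),
      (forall r, 0 < r < 1 -> 0 < w r),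
      (forall r, 1 <= r -> w r = 0)
    & (\int[mu]_(z in [set: R]) (w `|z| * z ^+ 2)%:E = 2%:E)%E].

Definition w_d (w : R -> R) (d x y : R) : R := d ^- 3 * w (`|x - y| / d).

Definition a_d (w : R -> R) (d x : R) : R :=
  Rintegral mu `]0, 1[ (fun y => w_d w d x y).

Definition b_d (w : R -> R) (d x : R) : R :=
  if (0 < x) && (x < d) then
    2 / (x + d) ^+ 2 * Rintegral mu `[x - d, 0] (fun y => (x - y) * w_d w d x y)
  else if (1 - d < x) && (x < 1) then
    2 / (1 - x + d) ^+ 2 * Rintegral mu `[1, x + d] (fun y => (y - x) * w_d w d x y)
  else 0.

Definition chi (A : set R) (r : R) : R := \1_A r.

Definition wt_d (w : R -> R) (d x y : R) : R :=
  `| w_d w d x y - b_d w d x * chi `]0, d[ `|y - x| |.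

Definition A2s_ge (w : R -> R) (d x : R) : set R :=
  [set y | 0 < y < 1 /\ 0 <= w_d w d x y - b_d w d x * chi `[0, d] `|y - x|].
Definition A2s_le (w : R -> R) (d x : R) : set R :=
  [set y | 0 < y < 1 /\ w_d w d x y - b_d w d x * chi `[0, d] `|y - x| <= 0].
Definition A2s (w : R -> R) (d : R) : Prop :=
  forall x, 0 < x < 1 -> (mu (A2s_le w d x) <= mu (A2s_ge w d x))%E.

End Defs.

From HB Require Import structures.
From mathcomp Require Import all_boot all_order all_algebra.
From mathcomp Require Import all_classical all_reals all_analysis.
From mathcomp Require Import ring lra measurable_realfun.
Import Order.TTheory GRing.Theory Num.Theory.
Import numFieldNormedType.Exports.
Local Open Scope classical_set_scope.
Local Open Scope ring_scope.

(* Put g := w_d - wt_d, so that a_d - \int wt_d = \int_0^1 g.  The function g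
   vanishes off N := {y | 0 < |y - x| < d}, and equals 2 min(w_d, b) - b >= -b
   on N.
   If w_d >= b on |y - x| <= 3d/4, then g = b there and the annulus
   3d/4 < |y - x| < d, of measure at most d/2, costs at most b, whence
   \int g >= b d/4.
   Otherwise w_d < b at some point within 3d/4 of x, hence, w being
   nonincreasing, at every point of N farther away.  On the set P of points of N
   where w_d < b we have g = b - 2 (b - w_d); (A2s) says exactly that
   2 |P| <= |N|, so \int g >= 2 \int_P w_d >= 2 d^-3 w(7/8) d/8.
   As b <= 2 d^-3 w(0), both bounds dominate C d b for C = w(7/8) / (8 w(0)). *)

Section MeasureArith.
Context {dT : measure_display} {T : measurableType dT} {R : realType}.
Context {mu : {measure set T -> \bar R}}.

Lemma integrableD_EFin {D : set T} {f g : T -> R} : measurable D ->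
  mu.-integrable D (EFin \o f) -> mu.-integrable D (EFin \o g) ->
  mu.-integrable D (EFin \o (f \+ g)).
Proof.
move=> mD if1 if2.
by apply: eq_integrable (integrableD mD if1 if2) => // y _; rewrite /= EFinD.
Qed.

Lemma integrableB_EFin {D : set T} {f g : T -> R} : measurable D ->
  mu.-integrable D (EFin \o f) -> mu.-integrable D (EFin \o g) ->
  mu.-integrable D (EFin \o (f \- g)).
Proof.
move=> mD if1 if2.
by apply: eq_integrable (integrableB mD if1 if2) => // y _; rewrite /= EFinB.
Qed.

Lemma twice_measure_le (N P O Z : set T) :
  measurable N -> measurable P -> measurable O -> measurable Z ->
  P `<=` N -> N `&` O = set0 -> mu Z = 0%E ->
  (mu N < +oo)%E -> (mu O < +oo)%E ->
  (mu (P `|` O) <= mu ((N `\` P) `|` O `|` Z))%E ->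
  2 * fine (mu P) <= fine (mu N).
Proof.
move=> mN mP mO mZ PN NO Z0 Nfin Ofin hPO.
have mNP : measurable (N `\` P) by exact: measurableD.
have finE A : measurable A -> A `<=` N -> mu A \is a fin_num.
  move=> mA AN; rewrite ge0_fin_numE //; apply: le_lt_trans Nfin.
  by apply: le_measure; rewrite ?inE.
have NE : mu N = (mu (N `\` P) + mu P)%E.
  by rewrite -measureU ?setDKU ?setDKI.
have POE : mu (P `|` O) = (mu P + mu O)%E.
  rewrite measureU //; apply/seteqP; split=> // y [Py Oy].
  by rewrite -NO; split; [exact: PN|].
have hNPO : (mu ((N `\` P) `|` O `|` Z) <= mu (N `\` P) + mu O)%E.
  have mNPO : measurable (N `\` P `|` O) by exact: measurableU.
  apply: le_trans (measureU2 mu mNPO mZ) _.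
  by rewrite [X in (_ + X <= _)%E](_ : _ = 0%E) // adde0 measureU2.
have fO : mu O \is a fin_num by rewrite ge0_fin_numE.
have : (mu P <= mu (N `\` P))%E.
  by rewrite -(leeD2rE _ _ fO) -POE (le_trans hPO).
move/(fine_le (finE _ mP PN) (finE _ mNP (@subDsetl _ _ _))).
by rewrite NE fineD ?finE // => ?; lra.
Qed.

End MeasureArith.

Section LebesgueReal.
Context {R : realType}.
Local Notation mu := (@lebesgue_measure R).

Lemma lebesgue_measure_itv_len (a b : R) (b0 b1 : bool) : a <= b ->
  mu [set` Interval (BSide b0 a) (BSide b1 b)] = (b - a)%:E.
Proof.
move=> ab; rewrite lebesgue_measure_itv /=.
have [->|ab'] := eqVneq a b; first by rewrite ltxx subrr.
by rewrite lte_fin lt_neqAle ab' ab -EFinD.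
Qed.

Lemma lebesgue_measure01_lty : (mu `]0%R, 1%R[ < +oo)%E.
Proof. by rewrite lebesgue_measure_itv_len ?ler01 // ltry. Qed.

Lemma lebesgue_measureI01_fin_num (S : set R) : measurable S ->
  mu (S `&` `]0, 1[) \is a fin_num.
Proof.
move=> mS; rewrite ge0_fin_numE //; apply: (@le_lt_trans _ _ (mu `]0, 1[)).
  have mI : measurable (S `&` `]0, 1[) by exact: measurableI.
  by apply: le_measure; rewrite ?inE // => ? [].
exact: lebesgue_measure01_lty.
Qed.

Lemma indic_preimage {T : Type} (f : T -> R) (i : interval R) (y : T) :
  \1_(f @^-1` [set` i]) y = (f y \in i)%:R :> R.
Proof.
suff E : (y \in f @^-1` [set` i]) = (f y \in i) by rewrite indicE E.
by apply/idP/idP => [/set_mem|?]; [|apply/mem_set].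
Qed.

Lemma measurable_dist_preimage (x : R) (B : set R) : measurable B ->
  measurable ((fun y => `|y - x|) @^-1` B).
Proof.
move=> mB; rewrite -[X in measurable X]setTI.
by apply: measurableT_comp => //; exact: measurable_funB.
Qed.

Lemma bounded_integrable (D : set R) (f : R -> R) (M : R) :
  measurable D -> (mu D < +oo)%E -> measurable_fun setT f ->
  (forall y, D y -> `|f y| <= M) -> mu.-integrable D (EFin \o f).
Proof.
move=> mD Dfin mf fM; apply: measurable_bounded_integrable => //.
  exact: measurable_funS mf.
rewrite /bounded_near; near=> K => y /= Dy.
by rewrite (le_trans (fM y Dy)) //; near: K; apply: nbhs_pinfty_ge.
Unshelve. all: end_near.
Qed.

Lemma integrable_scale_indic (D A : set R) (a : R) :
  measurable D -> (mu D < +oo)%E -> measurable A ->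
  mu.-integrable D (EFin \o (fun y => a * \1_A y)).
Proof.
move=> mD Dfin mA; apply: (@bounded_integrable _ _ `|a|) => //.
  by apply: measurable_funM => //; exact: measurable_indic.
move=> y _; rewrite normrM -[leRHS]mulr1 ler_wpM2l // indicE.
by case: (_ \in _); rewrite ?normr1 ?normr0.
Qed.

Lemma Rintegral_scale_indic (D A : set R) (a : R) :
  measurable D -> (mu D < +oo)%E -> measurable A ->
  Rintegral mu D (fun y => a * \1_A y) = a * fine (mu (A `&` D)).
Proof.
move=> mD Dfin mA; rewrite RintegralZl //; last first.
  by have := @integrable_scale_indic D A 1 mD Dfin mA; under eq_fun do rewrite mul1r.
by rewrite /Rintegral integral_indic.
Qed.

Lemma Rintegral_le_measure (D : set R) (f : R -> R) (c : R) :
  measurable D -> (mu D < +oo)%E -> measurable_fun setT f ->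
  (forall y, D y -> 0 <= f y <= c) -> Rintegral mu D f <= c * fine (mu D).
Proof.
move=> mD Dfin mf fc; rewrite -Rintegral_cst //; apply: le_Rintegral => //.
- apply: (@bounded_integrable _ _ c) => // y /fc /andP[f0 ?].
  by rewrite ger0_norm.
- exact: (@bounded_integrable _ _ `|c|).
- by move=> y /fc /andP[].
Qed.

Lemma Rintegral_itv_le (p q c : R) (f : R -> R) : p <= q -> measurable_fun setT f ->
  (forall y, p <= y <= q -> 0 <= f y <= c) -> Rintegral mu `[p, q] f <= c * (q - p).
Proof.
move=> pq mf fc; have mu_pq : mu `[p, q] = (q - p)%:E by exact: lebesgue_measure_itv_len.
have := @Rintegral_le_measure `[p, q] f c (measurable_itv _).
rewrite mu_pq ltry; apply => // y; rewrite /= in_itv; exact: fc.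
Qed.

End LebesgueReal.

Definition annulus {R : realType} (x r1 r2 : R) : set R :=
  (fun y => `|y - x|) @^-1` `]r1, r2[.

Section Annulus.
Context {R : realType} (x : R).
Local Notation mu := (@lebesgue_measure R).

Lemma measurable_annulus (r1 r2 : R) : measurable (annulus x r1 r2).
Proof. exact: measurable_dist_preimage. Qed.

Lemma annulus_measure_ge (r1 r2 : R) : 0 < x < 1 -> 0 <= r1 <= r2 ->
  r2 <= 1 / 2 -> r2 - r1 <= fine (mu (annulus x r1 r2 `&` `]0, 1[)).
Proof.
move=> /andP[x0 x1] /andP[r10 r12] r2h.
have mS := measurableI _ _ (measurable_annulus r1 r2) (measurable_itv `]0, 1[).
have side (a : R) : `]a, a + (r2 - r1)[ `<=` annulus x r1 r2 `&` `]0, 1[ ->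
    r2 - r1 <= fine (mu (annulus x r1 r2 `&` `]0, 1[)).
  move=> sub; rewrite -lee_fin fineK ?lebesgue_measureI01_fin_num //.
    have <- : mu `]a, a + (r2 - r1)[ = (r2 - r1)%:E.
      by rewrite lebesgue_measure_itv_len; [congr EFin; ring | lra].
    by apply: le_measure; rewrite ?inE //; exact: measurable_itv.
  exact: measurable_annulus.
have [xh|xh] := leP x (1 / 2).
  apply: (side (x + r1)) => y /=; rewrite !in_itv /= => /andP[h1 h2].
  by rewrite /annulus /= in_itv /= ger0_norm; [split; apply/andP; split|]; lra.
apply: (side (x - r2)) => y /=; rewrite !in_itv /= => /andP[h1 h2].
by rewrite /annulus /= in_itv /= ler0_norm; [split; apply/andP; split|]; lra.
Qed.

Lemma annulus_measure_le (r1 r2 : R) : 0 <= r1 <= r2 ->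
  fine (mu (annulus x r1 r2 `&` `]0, 1[)) <= 2 * (r2 - r1).
Proof.
move=> /andP[r10 r12].
have mS := measurableI _ _ (measurable_annulus r1 r2) (measurable_itv `]0, 1[).
have sub : annulus x r1 r2 `&` `]0, 1[ `<=` `]x - r2, x - r1[ `|` `]x + r1, x + r2[.
  move=> y []; rewrite /annulus /= in_itv /= => /andP[h1 h2] _.
  have [yx|yx] := leP x y; [right | left]; rewrite /= in_itv /=.
    by rewrite ger0_norm ?subr_ge0 // in h1 h2; apply/andP; split; lra.
  by rewrite ltr0_norm ?subr_lt0 // in h1 h2; apply/andP; split; lra.
rewrite -lee_fin fineK ?lebesgue_measureI01_fin_num //; last exact: measurable_annulus.
have mU : measurable (`]x - r2, x - r1[ `|` `]x + r1, x + r2[ : set R).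
  by apply: measurableU; exact: measurable_itv.
apply: le_trans (le_measure mu (mem_set mS) (mem_set mU) sub) _.
have len2 : (mu `](x - r2)%R, (x - r1)%R[ + mu `](x + r1)%R, (x + r2)%R[
    <= (2 * (r2 - r1))%:E)%E.
  by rewrite !lebesgue_measure_itv_len -?EFinD ?lee_fin; lra.
exact: le_trans (measureU2 mu (measurable_itv _) (measurable_itv _)) len2.
Qed.

End Annulus.

Section Kernel.
Context {R : realType} {w : R -> R} (hw : A1 w).
Local Notation mu := (@lebesgue_measure R).

Lemma w_ge0 r : 0 <= r -> 0 <= w r.
Proof. by have [w0 _] := hw; exact: w0. Qed.

Lemma w_nonincreasing r s : 0 <= r -> r <= s -> w s <= w r.
Proof.
move=> r0 rs; have [_ [_ w_mono _ w_far _]] := hw.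
have [s1|s1] := ltP s 1; first exact: w_mono.
by rewrite w_far // w_ge0.
Qed.

Context {d x : R} (d_gt0 : 0 < d).
Local Notation wd := (w_d w d x).
Local Notation b := (b_d w d x).

Lemma measurable_w_d : measurable_fun setT wd.
Proof.
(* (A1) gives no measurability of w on all of R; monotonicity of r |-> w (max r 0) does. *)
pose v r := w (Num.max r 0).
have v_nonincr : {homo v : r s / (r <= s)%O >-> (s <= r)%O}.
  move=> r s rs; apply: w_nonincreasing; first by rewrite le_max lexx orbT.
  by rewrite ge_max !le_max lexx orbT (le_trans rs) // le_max lexx.
have mv : measurable_fun setT v by exact: nonincreasing_measurable.
have -> : wd = (fun y => d ^- 3 * v (`|x - y| / d)).
  by apply/funext => y; rewrite /w_d /v max_l // divr_ge0 // ltW.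
apply: measurable_funM => //; apply: measurableT_comp => //.
apply: measurable_funM => //; apply: measurableT_comp => //.
exact: measurable_funB.
Qed.

Lemma w_d_ge0 y : 0 <= wd y.
Proof.
by rewrite /w_d mulr_ge0 ?invr_ge0 ?exprn_ge0 ?w_ge0 ?divr_ge0 // ltW.
Qed.

Lemma w_d_nonincreasing y z : `|y - x| <= `|z - x| -> wd z <= wd y.
Proof.
move=> yz; rewrite /w_d ler_wpM2l ?invr_ge0 ?exprn_ge0 ?(ltW d_gt0) //.
apply: w_nonincreasing; first by rewrite divr_ge0 // ltW.
by rewrite ler_pM2r ?invr_gt0 // distrC (distrC x).
Qed.

Lemma w_d_le y : wd y <= d ^- 3 * w 0.
Proof.
have -> : d ^- 3 * w 0 = wd x by rewrite /w_d subrr normr0 mul0r.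
by apply: w_d_nonincreasing; rewrite subrr normr0.
Qed.

Lemma w_d_ge r y : `|y - x| <= r * d -> d ^- 3 * w r <= wd y.
Proof.
move=> yr; rewrite /w_d ler_wpM2l ?invr_ge0 ?exprn_ge0 ?(ltW d_gt0) //.
apply: w_nonincreasing; first by rewrite divr_ge0 // ltW.
by rewrite ler_pdivrMr // distrC.
Qed.

Lemma w_d_far y : d <= `|y - x| -> wd y = 0.
Proof.
move=> dy; have [_ [_ _ _ w_far _]] := hw.
by rewrite /w_d w_far ?mulr0 // ler_pdivlMr // mul1r distrC.
Qed.

Lemma b_d_ge0 : 0 <= b.
Proof.
have s_gt0 (s : R) : 0 < s -> 0 <= 2 / s ^+ 2 by move=> ?; rewrite divr_ge0 ?exprn_ge0 ?ltW.
rewrite /b_d; case: ifP => [/andP[x0 _]|_].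
  apply: mulr_ge0; first by apply: s_gt0; rewrite addr_gt0.
  apply: Rintegral_ge0 => y; rewrite /= in_itv /= => /andP[_ y0].
  by rewrite mulr_ge0 ?w_d_ge0 // subr_ge0 (le_trans y0) // ltW.
case: ifP => [/andP[_ x1]|_] //.
apply: mulr_ge0; first by apply: s_gt0; rewrite addr_gt0 // subr_gt0.
apply: Rintegral_ge0 => y; rewrite /= in_itv /= => /andP[y1 _].
by rewrite mulr_ge0 ?w_d_ge0 // subr_ge0 (le_trans _ y1) // ltW.
Qed.

Lemma b_d_le : b <= 2 * (d ^- 3 * w 0).
Proof.
set K := d ^- 3 * w 0.
have K0 : 0 <= K := le_trans (w_d_ge0 x) (w_d_le x).
have scale (s I : R) : d <= s -> I <= K * d ^+ 2 -> 2 / s ^+ 2 * I <= 2 * K.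
  move=> ds IK; have s0 : 0 < s := lt_le_trans d_gt0 ds.
  have ds2 : d ^+ 2 <= s ^+ 2 by rewrite !expr2; apply: ler_pM => //; exact: ltW.
  rewrite mulrAC ler_pdivrMr ?exprn_gt0 // -mulrA ler_pM2l //.
  exact: le_trans IK (ler_wpM2l K0 ds2).
have branch (p q : R) (f : R -> R) : measurable_fun setT f -> p <= q -> q - p <= d ->
    (forall y, p <= y <= q -> 0 <= f y <= d) ->
    Rintegral mu `[p, q] (fun y => f y * wd y) <= K * d ^+ 2.
  move=> mf pq qpd fd; have dK : 0 <= d * K by rewrite mulr_ge0 // ltW.
  apply: le_trans (@Rintegral_itv_le _ _ _ (d * K) _ pq _ _) _.
  - by apply: measurable_funM => //; exact: measurable_w_d.
  - move=> y /fd /andP[f0 fd']; have /andP[w0 wK] : 0 <= wd y <= K.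
      by rewrite w_d_ge0 w_d_le.
    by rewrite mulr_ge0 //=; nra.
  - have -> : K * d ^+ 2 = d * K * d by rewrite expr2; ring.
    nra.
rewrite /b_d; case: ifP => [/andP[x0 xd]|_].
  apply: scale; first by lra.
  apply: branch; [exact: measurable_funB | lra | lra |].
  by move=> y /andP[? ?]; apply/andP; split; lra.
case: ifP => [/andP[x0 x1]|_]; last by rewrite mulr_ge0.
apply: scale; first by lra.
apply: branch; [exact: measurable_funB | lra | lra |].
by move=> y /andP[? ?]; apply/andP; split; lra.
Qed.

Lemma measurable_wt_d : measurable_fun setT (wt_d w d x).
Proof.
apply: measurableT_comp => //; apply: measurable_funB; first exact: measurable_w_d.
apply: measurable_funM => //; rewrite /chi.
apply: measurableT_comp; first exact: measurable_indic.
by apply: measurableT_comp => //; exact: measurable_funB.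
Qed.

Lemma integrable_w_d : mu.-integrable `]0, 1[ (EFin \o wd).
Proof.
apply: (@bounded_integrable _ _ _ (d ^- 3 * w 0)); rewrite ?lebesgue_measure01_lty //.
  exact: measurable_w_d.
by move=> y _; rewrite ger0_norm ?w_d_ge0 ?w_d_le.
Qed.

Lemma integrable_wt_d : mu.-integrable `]0, 1[ (EFin \o wt_d w d x).
Proof.
apply: (@bounded_integrable _ _ _ (d ^- 3 * w 0 + b)); rewrite ?lebesgue_measure01_lty //.
  exact: measurable_wt_d.
move=> y _; rewrite normr_id (le_trans (ler_normB _ _)) // lerD //.
  by rewrite ger0_norm ?w_d_ge0 ?w_d_le.
rewrite /chi indicE normrM (ger0_norm b_d_ge0).
by case: (`|y - x| \in _); rewrite ?normr1 ?normr0 ?mulr1 ?mulr0 ?b_d_ge0.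
Qed.

Lemma le_a_d_sub_Rintegral_wt_d {f : R -> R} :
  mu.-integrable `]0, 1[ (EFin \o f) -> (forall y, f y <= wd y - wt_d w d x y) ->
  Rintegral mu `]0, 1[ f <= a_d w d x - Rintegral mu `]0, 1[ (wt_d w d x).
Proof.
move=> intf f_le; have iw := integrable_w_d; have iwt := integrable_wt_d.
have iB : mu.-integrable `]0, 1[ (EFin \o (wd \- wt_d w d x)) by apply: integrableB_EFin.
by rewrite /a_d -RintegralB //; apply: le_Rintegral => // y _; exact: f_le.
Qed.

Lemma w_d_sub_wt_d y :
  wd y - wt_d w d x y = \1_(annulus x 0 d) y * (2 * Num.min (wd y) b - b).
Proof.
have -> : wt_d w d x y = `|wd y - b * \1_(annulus x 0 d) y| by [].
rewrite indicE; case: (y \in annulus x 0 d); rewrite /= ?mulr1 ?mul1r ?mulr0 ?mul0r.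
  have [vb|bv] := leP (wd y) b.
    by rewrite ler0_norm ?subr_le0 //; lra.
  by rewrite gtr0_norm ?subr_gt0 //; lra.
by rewrite subr0 ger0_norm ?w_d_ge0 // subrr.
Qed.

Local Notation below_b := (annulus x 0 d `&` wd @^-1` `]-oo, b[).
Local Notation far := ((fun y => `|y - x|) @^-1` `[d, +oo[).

Lemma measurable_below_b : measurable below_b.
Proof.
apply: measurableI; first exact: measurable_annulus.
by rewrite -[X in measurable X]setTI; exact: measurable_w_d.
Qed.

Lemma chi1 (A : set R) r : A r -> chi A r = 1.
Proof. by move=> Ar; rewrite /chi indicE mem_set. Qed.

Lemma chi_ge0 (A : set R) r : 0 <= chi A r.
Proof. by rewrite /chi indicE. Qed.

Lemma measurable_A2s_fun : measurable_fun setT (fun y => wd y - b * chi `[0, d] `|y - x|).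
Proof.
apply: measurable_funB; first exact: measurable_w_d.
apply: measurable_funM => //; apply: measurableT_comp; first exact: measurable_indic.
by apply: measurableT_comp => //; exact: measurable_funB.
Qed.

Lemma measurable_A2s_le : measurable (A2s_le w d x).
Proof.
have -> : A2s_le w d x =
    `]0, 1[ `&` (fun y => wd y - b * chi `[0, d] `|y - x|) @^-1` `]-oo, 0].
  by apply/seteqP; split => y; rewrite /A2s_le /= !in_itv.
apply: measurableI => //; rewrite -[X in measurable X]setTI.
exact: measurable_A2s_fun.
Qed.

Lemma measurable_A2s_ge : measurable (A2s_ge w d x).
Proof.
have -> : A2s_ge w d x =
    `]0, 1[ `&` (fun y => wd y - b * chi `[0, d] `|y - x|) @^-1` `[0, +oo[.
  by apply/seteqP; split => y; rewrite /A2s_ge /= !in_itv /= andbT.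
apply: measurableI => //; rewrite -[X in measurable X]setTI.
exact: measurable_A2s_fun.
Qed.

Lemma A2s_le_supset : below_b `&` `]0, 1[ `|` far `&` `]0, 1[ `<=` A2s_le w d x.
Proof.
move=> y [[[]]|[]]; rewrite /annulus /= !in_itv /= ?andbT.
  move=> /andP[t0 td] wb y01; split => //.
  by rewrite chi1 ?mulr1 ?subr_le0 ?ltW //= in_itv /= normr_ge0 ltW.
move=> dt y01; split => //.
by rewrite w_d_far // sub0r oppr_le0 mulr_ge0 ?chi_ge0 ?b_d_ge0.
Qed.

Lemma A2s_ge_subset : A2s_ge w d x `<=`
  (annulus x 0 d `&` `]0, 1[) `\` (below_b `&` `]0, 1[) `|` far `&` `]0, 1[ `|` [set x].
Proof.
move=> y [y01 Fy]; have [->|yx] := eqVneq y x; first by right.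
left; have [dt|td] := leP d `|y - x|; first by right; split; rewrite //= in_itv /= dt.
have t0 : 0 < `|y - x| by rewrite normr_gt0 subr_eq0.
left; split; first by split; rewrite // /annulus /= in_itv /= t0.
rewrite chi1 ?mulr1 ?subr_ge0 in Fy; last by rewrite /= in_itv /= normr_ge0 ltW.
by move=> [[_]]; rewrite /= in_itv /= ltNge Fy.
Qed.

Lemma A2s_deficit : 0 < x < 1 -> A2s w d ->
  2 * fine (mu (below_b `&` `]0, 1[)) <= fine (mu (annulus x 0 d `&` `]0, 1[)).
Proof.
move=> x01 hA.
have mI01 : measurable (`]0, 1[%classic : set R) by exact: measurable_itv.
have mN := measurable_annulus x 0 d.
have mfar : measurable far by exact: measurable_dist_preimage.
have mP := measurable_below_b.
have lty (S : set R) : measurable S -> (mu (S `&` `]0%R, 1%R[) < +oo)%E.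
  by move=> mS; rewrite -ge0_fin_numE ?lebesgue_measureI01_fin_num.
apply: (@twice_measure_le _ _ _ mu _ _ (far `&` `]0, 1[) [set x]).
- exact: measurableI.
- exact: measurableI.
- exact: measurableI.
- exact: measurable_set1.
- by move=> y [[]].
- apply/seteqP; split => // y [[]]; rewrite /annulus /= !in_itv /= andbT.
  by move=> /andP[_ yd] _ [dy _]; lra.
- exact: lebesgue_measure_set1.
- exact: lty.
- exact: lty.
have mU1 : measurable (below_b `&` `]0, 1[ `|` far `&` `]0, 1[).
  by apply: measurableU; exact: measurableI.
have mU2 : measurable
    ((annulus x 0 d `&` `]0, 1[) `\` (below_b `&` `]0, 1[) `|` far `&` `]0, 1[ `|` [set x]).
  apply: measurableU; last exact: measurable_set1.
  by apply: measurableU; [apply: measurableD|]; apply: measurableI.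
apply: le_trans (le_measure mu (mem_set mU1) (mem_set measurable_A2s_le) A2s_le_supset) _.
apply: le_trans (hA x x01) _.
have h := le_measure mu (mem_set measurable_A2s_ge) (mem_set mU2) A2s_ge_subset.
exact: h.
Qed.

Lemma plateau_pointwise y :
  (forall z, `|z - x| <= 3 * d / 4 -> b <= wd z) ->
  b * \1_(annulus x 0 (3 * d / 4)) y - b * \1_(annulus x (3 * d / 4) d) y
    <= wd y - wt_d w d x y.
Proof.
move=> plateau; rewrite w_d_sub_wt_d /annulus !indic_preimage !in_itv /=.
have b0 := b_d_ge0; have m0 : 0 <= Num.min (wd y) b by rewrite le_min w_d_ge0.
have [tq|tq] := leP `|y - x| (3 * d / 4).
  rewrite /= mulr0 subr0 min_r ?plateau //.
  have [t0|t0] := ltP 0 `|y - x|; last by rewrite /= mulr0 mul0r.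
  have td : `|y - x| < d by lra.
  by rewrite /= td mul1r; case: (_ < _); rewrite /= ?mulr1 ?mulr0; lra.
(* [lra] does not see section hypotheses such as [d_gt0]. *)
have t0 : 0 < `|y - x| by have := d_gt0; lra.
rewrite t0 [`|y - x| < _]ltNge (ltW tq) /= mulr0 sub0r.
by case: (_ < d); rewrite /= ?mulr1 ?mul1r ?mulr0 ?mul0r ?oppr0; lra.
Qed.

Lemma dip_pointwise y0 y : `|y0 - x| <= 3 * d / 4 -> wd y0 < b ->
  b * \1_(annulus x 0 d) y - 2 * b * \1_below_b y
    + 2 * (d ^- 3 * w (7 / 8)) * \1_(annulus x (3 * d / 4) (7 * d / 8)) y
    <= wd y - wt_d w d x y.
Proof.
move=> y0_near y0_dip.
have far_dip : 3 * d / 4 <= `|y - x| -> wd y < b.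
  by move=> ty; apply: le_lt_trans y0_dip; apply: w_d_nonincreasing; lra.
have band_ge : `|y - x| < 7 * d / 8 -> d ^- 3 * w (7 / 8) <= wd y.
  by move=> ty; apply: w_d_ge; lra.
rewrite w_d_sub_wt_d indicI /= /annulus !indic_preimage !in_itv /=.
have w0 := w_d_ge0 y.
case: (boolP (0 < `|y - x| < d)) => [/andP[t0 td]|tN].
  case: (boolP (3 * d / 4 < `|y - x| < 7 * d / 8)) => [/andP[t1 t2]|_].
    have := band_ge t2; have vb := far_dip (ltW t1).
    by rewrite vb (min_l (ltW vb)) /= ?mulr1 ?mul1r; lra.
  by have [vb|bv] := ltP (wd y) b; rewrite /= ?mulr1 ?mul1r ?mulr0 ?mul0r; lra.
have -> : (3 * d / 4 < `|y - x| < 7 * d / 8) = false.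
  apply/negbTE; apply: contra tN => /andP[t1 t2]; apply/andP; split; lra.
by rewrite /= !mulr0 !mul0r; lra.
Qed.

Lemma plateau_bound : 0 < x < 1 -> d < 1 / 2 ->
  (forall z, `|z - x| <= 3 * d / 4 -> b <= wd z) ->
  b * (d / 4) <= a_d w d x - Rintegral mu `]0, 1[ (wt_d w d x).
Proof.
move=> x01 dh plateau; have d0 := d_gt0.
(* measurability for the sigma-algebra of [lebesgue_measure], not the Borel one on R *)
have mI01 : measurable (`]0, 1[ : set (measurableTypeR R)) by [].
have int_ann r1 r2 := @integrable_scale_indic _ _ _ b mI01
  lebesgue_measure01_lty (measurable_annulus x r1 r2).
have Rint_ann r1 r2 := @Rintegral_scale_indic _ _ _ b mI01
  lebesgue_measure01_lty (measurable_annulus x r1 r2).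
apply: le_trans (le_a_d_sub_Rintegral_wt_d
  (integrableB_EFin mI01 (int_ann 0 (3 * d / 4)) (int_ann (3 * d / 4) d))
  (plateau_pointwise^~ plateau)).
rewrite /= (RintegralB mI01 (int_ann _ _) (int_ann _ _)) !Rint_ann.
have m1 : 3 * d / 4 <= fine (mu (annulus x 0 (3 * d / 4) `&` `]0, 1[)).
  by rewrite -[leLHS]subr0; apply: annulus_measure_ge => //; rewrite ?lexx /=; lra.
have m2 : fine (mu (annulus x (3 * d / 4) d `&` `]0, 1[)) <= 2 * (d - 3 * d / 4).
  by apply: annulus_measure_le; apply/andP; split; lra.
have b0 := b_d_ge0; nra.
Qed.

Lemma dip_bound y0 : 0 < x < 1 -> d < 1 / 2 -> A2s w d ->
  `|y0 - x| <= 3 * d / 4 -> wd y0 < b ->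
  d ^- 3 * w (7 / 8) * (d / 4) <= a_d w d x - Rintegral mu `]0, 1[ (wt_d w d x).
Proof.
move=> x01 dh hA y0_near y0_dip; have d0 := d_gt0.
set c := d ^- 3 * w (7 / 8).
have mI01 : measurable (`]0, 1[ : set (measurableTypeR R)) by [].
have int_ind a A (mA : measurable A) :=
  @integrable_scale_indic _ _ A a mI01 lebesgue_measure01_lty mA.
have Rint_ind a A (mA : measurable A) :=
  @Rintegral_scale_indic _ _ A a mI01 lebesgue_measure01_lty mA.
have mN := measurable_annulus x 0 d.
have mT := measurable_annulus x (3 * d / 4) (7 * d / 8).
have mP := measurable_below_b.
apply: le_trans (le_a_d_sub_Rintegral_wt_d
  (integrableD_EFin mI01 (integrableB_EFin mI01 (int_ind b _ mN) (int_ind (2 * b) _ mP))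
     (int_ind (2 * c) _ mT))
  (fun y => dip_pointwise y0 y y0_near y0_dip)).
rewrite /= (RintegralD mI01 (integrableB_EFin mI01 (int_ind _ _ mN) (int_ind _ _ mP))
  (int_ind _ _ mT)) (RintegralB mI01 (int_ind _ _ mN) (int_ind _ _ mP)).
rewrite (Rint_ind _ _ mN) (Rint_ind _ _ mP) (Rint_ind _ _ mT).
have m_dip := A2s_deficit x01 hA.
have m_band : d / 8 <= fine (mu (annulus x (3 * d / 4) (7 * d / 8) `&` `]0, 1[)).
  have -> : d / 8 = 7 * d / 8 - 3 * d / 4 by field.
  by apply: annulus_measure_ge => //; [apply/andP; split|]; lra.
have c0 : 0 <= c.
  by rewrite mulr_ge0 ?invr_ge0 ?exprn_ge0 ?(ltW d0) // w_ge0 //; lra.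
have b0 := b_d_ge0; nra.
Qed.

Lemma a_d_sub_Rintegral_wt_d_ge : 0 < x < 1 -> d < 1 / 2 -> A2s w d ->
  Num.min b (d ^- 3 * w (7 / 8)) * (d / 4)
    <= a_d w d x - Rintegral mu `]0, 1[ (wt_d w d x).
Proof.
move=> x01 dh hA; have d4 : 0 <= d / 4 by rewrite divr_ge0 // ltW.
have [[y0 [y0_near y0_dip]]|no_dip] :=
  pselect (exists y0, `|y0 - x| <= 3 * d / 4 /\ wd y0 < b).
  apply: le_trans (dip_bound y0 x01 dh hA y0_near y0_dip).
  by rewrite ler_wpM2r // ge_min lexx orbT.
apply: le_trans (plateau_bound x01 dh _); first by rewrite ler_wpM2r // ge_min lexx.
by move=> z zx; rewrite leNgt; apply/negP => zb; apply: no_dip; exists z.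
Qed.

End Kernel.

Theorem mainTheorem6 (R : realType) (w : R -> R) :
  A1 w ->
  (forall d : R, 0 < d < 1 / 2 -> A2s w d) ->
  exists C : R, 0 < C /\
    forall d : R, 0 < d < 1 / 2 ->
    forall x : R, 0 < x < 1 ->
      C * d * b_d w d x <=
        a_d w d x - Rintegral (@lebesgue_measure R) `]0, 1[ (fun y => wt_d w d x y).
Proof.
move=> hw hA; have [_ [_ _ w_pos _ _]] := hw.
have w78_gt0 : 0 < w (7 / 8) by apply: w_pos; apply/andP; split; lra.
have w78_le : w (7 / 8) <= w 0 by apply: (w_nonincreasing hw); lra.
have w0_gt0 : 0 < w 0 := lt_le_trans w78_gt0 w78_le.
set C := w (7 / 8) / (8 * w 0).
have C_gt0 : 0 < C by rewrite divr_gt0 // mulr_gt0.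
have C_le : C <= 1 / 8 by rewrite ler_pdivrMr ?mulr_gt0 //; lra.
exists C; split => // d /andP[d0 dh] x x01.
have b0 : 0 <= b_d w d x := b_d_ge0 hw d0.
apply: le_trans (a_d_sub_Rintegral_wt_d_ge hw d0 x01 dh (hA d _)); last first.
  by rewrite d0 dh.
rewrite minr_pMl ?le_min ?divr_ge0 ?(ltW d0) //; apply/andP; split.
  have db : 0 <= d * b_d w d x by rewrite mulr_ge0 // ltW.
  nra.
have -> : d ^- 3 * w (7 / 8) * (d / 4) = C * d * (2 * (d ^- 3 * w 0)).
  by rewrite /C; field; rewrite ?gt_eqF.
by rewrite ler_wpM2l ?b_d_le // mulr_ge0 // ltW.
Qed.
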